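(* Fix orthogonal projections $P_A,P_B$ on a Hilbert space $H$ and let $K=\ker P_A\cap\ker P_B$. For each positive $R\in B(H)$ let $R_\infty(R)$ denote the strong limit of the alternating weighted residual sequence started at $R_0=R$. Then $\{R_\infty(R): R\in B(H),\ R\ge0\}$ equals the set of all positive operators $T\in B(H)$ with $\operatorname{ran}(T)\subset K$.
   Context: For an orthogonal projection $P$ and positive $R\in B(H)$, $\Phi_P(R):=R^{1/2}(I-P)R^{1/2}$. The alternating weighted residual sequence started at $R_0\ge0$ is $R_{n+1}=\Phi_{P_B}(R_n)$ for $n$ even and $R_{n+1}=\Phi_{P_A}(R_n)$ for $n$ odd; it is decreasing in the Loewner order and converges strongly to a positive operator, called its limit. *)

From HB Require Import structures.
From mathcomp Require Import all_boot all_order all_algebra.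
From mathcomp Require Import complex.
From mathcomp Require Import reals.
From Stdlib Require Import ClassicalEpsilon.
Set Implicit Arguments. Unset Strict Implicit. Unset Printing Implicit Defensive.
Import Order.TTheory GRing.Theory Num.Theory.
Local Open Scope ring_scope.

Section Hilbert.
Variables (R : realType) (H : lmodType R[i]) (ip : H -> H -> R[i]).

Definition normsq (x : H) : R := complex.Re (ip x x).

Definition cvg_to (u : nat -> H) (l : H) : Prop :=
  forall e : R, 0 < e -> exists N : nat, forall n, (N <= n)%N -> normsq (u n - l) < e.

Definition cauchy_seq (u : nat -> H) : Prop :=
  forall e : R, 0 < e -> exists N : nat, forall n m, (N <= n)%N -> (N <= m)%N ->
    normsq (u n - u m) < e.

Definition is_hilbert : Prop :=
  [/\ (forall (a : R[i]) x y z, ip (a *: x + y) z = a * ip x z + ip y z),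
      (forall x y, ip y x = Num.conj (ip x y)),
      (forall x, 0 <= ip x x),
      (forall x, ip x x = 0 -> x = 0)
    & (forall u, cauchy_seq u -> exists l, cvg_to u l)].

Definition bounded_op (T : H -> H) : Prop :=
  (forall (a : R[i]) x y, T (a *: x + y) = a *: T x + T y) /\
  exists M : R, forall x, normsq (T x) <= M * normsq x.

(* positive operators: <T x, x> >= 0 (in the order of C, i.e. real and >= 0) *)
Definition positive_op (T : H -> H) : Prop :=
  bounded_op T /\ forall x, 0 <= ip (T x) x.

Definition orth_proj (P : H -> H) : Prop :=
  [/\ bounded_op P, (forall x, P (P x) = P x) & (forall x y, ip (P x) y = ip x (P y))].

Definition op_sqrt (T : H -> H) : H -> H :=
  epsilon (inhabits (fun x : H => x))
    (fun S => positive_op S /\ forall x, S (S x) = T x).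

Definition Phi (P T : H -> H) : H -> H :=
  fun x => op_sqrt T (op_sqrt T x - P (op_sqrt T x)).

Fixpoint residual (PA PB R0 : H -> H) (n : nat) : H -> H :=
  match n with
  | 0 => R0
  | k.+1 => Phi (if odd k then PA else PB) (residual PA PB R0 k)
  end.

Definition strong_limit (Rn : nat -> H -> H) (T : H -> H) : Prop :=
  forall x, cvg_to (fun n => Rn n x) (T x).

End Hilbert.

(* If R_n -> T strongly, T inherits linearity, positivity and the bound
   <R_n x, x> <= c |x|^2 (each step Phi_P only decreases the quadratic form).
   Square roots are built by hand: for 0 <= T <= c, T^{1/2} = sqrt c (I - Y) where
   Y is the strong limit of Y_0 = 0, Y_{k+1} = (I - T/c + Y_k^2)/2, and the error
   |Y - Y_k| <= 2/(k+2) does not depend on T.  Hence T |-> T^{1/2} is strongly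
   continuous on operators bounded by c, and uniqueness of positive square roots
   identifies the construction with op_sqrt.  Along the steps that use P,
   R_{n+1} = R_n^{1/2} (I - P) R_n^{1/2} thus tends to T^{1/2} (I - P) T^{1/2}, which
   must be T; so T^{1/2} P T^{1/2} = 0 and P T = 0.  Conversely P T = 0 forces
   P T^{1/2} = 0, so Phi_P fixes T and the sequence started at T is constant. *)

From HB Require Import structures.
From mathcomp Require Import all_boot all_order all_algebra.
From mathcomp Require Import complex.
From mathcomp Require Import reals.
From mathcomp Require Import ring lra.
From Stdlib Require Import ClassicalEpsilon FunctionalExtensionality.
Import Order.TTheory GRing.Theory Num.Theory.
Set Implicit Arguments. Unset Strict Implicit. Unset Printing Implicit Defensive.
Local Open Scope ring_scope.
Local Open Scope complex_scope.
Local Notation Re := (@complex.Re _).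
Local Notation Im := (@complex.Im _).

Lemma ge0_complex (R : realType) (z : R[i]) : (0 <= z) = (Im z == 0) && (0 <= Re z).
Proof. by rewrite lecE eq_sym. Qed.

Lemma complex_Re_Im (R : realType) (z w : R[i]) : Re z = Re w -> Im z = Im w -> z = w.
Proof. by case: z; case: w => ? ? ? ? /= -> ->. Qed.

Lemma Re_realM (R : realType) (r : R) (z : R[i]) : Re (r%:C * z) = r * Re z.
Proof. by case: z => a b /=; rewrite mul0r subr0. Qed.

Lemma conj_realC (R : realType) (r : R) : Num.conj r%:C = r%:C.
Proof. exact: conjc_real. Qed.

Lemma quadratic_ge0_discr (R : realType) (a b c : R) :
  0 <= a -> 0 <= c -> (forall t, 0 <= a + 2 * t * b + t ^+ 2 * c) -> b ^+ 2 <= a * c.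
Proof.
move=> a_ge0 c_ge0 q_ge0; have [c0|c_neq0] := eqVneq c 0.
  have [b0|b_neq0] := eqVneq b 0; first by rewrite b0 c0; nra.
  have := q_ge0 (- (a + 1) / (2 * b)); rewrite c0 mulr0 addr0.
  have -> : 2 * (- (a + 1) / (2 * b)) * b = - (a + 1) by field; rewrite b_neq0.
  lra.
have c_gt0 : 0 < c by rewrite lt_def c_neq0.
have := q_ge0 (- b / c); have : (- b / c) * c = - b by field.
nra.
Qed.

Section HermitianForm.
Variables (R : realType) (H : lmodType R[i]) (f : H -> H -> R[i]).
Hypotheses (f_linl : forall a x y z, f (a *: x + y) z = a * f x z + f y z)
  (f_conj : forall x y, f y x = Num.conj (f x y)) (f_ge0 : forall x, 0 <= f x x).

Lemma form0l z : f 0 z = 0.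
Proof.
have := f_linl 1 0 0 z; rewrite scaler0 addr0 mul1r => e.
by apply/(addrI (f 0 z)); rewrite addr0 -e.
Qed.

Lemma formDl x y z : f (x + y) z = f x z + f y z.
Proof. by rewrite -(scale1r x) f_linl mul1r scale1r. Qed.

Lemma formZl a x z : f (a *: x) z = a * f x z.
Proof. by rewrite -(addr0 (a *: x)) f_linl form0l addr0. Qed.

Lemma formNl x z : f (- x) z = - f x z.
Proof. by rewrite -scaleN1r formZl mulN1r. Qed.

Lemma formBl x y z : f (x - y) z = f x z - f y z.
Proof. by rewrite formDl formNl. Qed.

Lemma form0r z : f z 0 = 0.
Proof. by rewrite f_conj form0l rmorph0. Qed.

Lemma formDr x y z : f z (x + y) = f z x + f z y.
Proof. by rewrite f_conj (f_conj x z) (f_conj y z) formDl rmorphD. Qed.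

Lemma formZr a x z : f z (a *: x) = Num.conj a * f z x.
Proof. by rewrite f_conj (f_conj x z) formZl rmorphM. Qed.

Lemma formNr x z : f z (- x) = - f z x.
Proof. by rewrite f_conj (f_conj x z) formNl rmorphN. Qed.

Lemma formBr x y z : f z (x - y) = f z x - f z y.
Proof. by rewrite formDr formNr. Qed.

Lemma Re_formC x y : Re (f y x) = Re (f x y).
Proof. by rewrite f_conj; case: (f x y). Qed.

Lemma Im_form_diag x : Im (f x x) = 0.
Proof. by have := f_ge0 x; rewrite ge0_complex => /andP[/eqP]. Qed.

Lemma Re_form_diag_ge0 x : 0 <= Re (f x x).
Proof. by have := f_ge0 x; rewrite ge0_complex => /andP[]. Qed.

Lemma form_CauchySchwarz x y : Re (f x y) ^+ 2 <= Re (f x x) * Re (f y y).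
Proof.
apply: quadratic_ge0_discr; rewrite ?Re_form_diag_ge0 // => t.
have := Re_form_diag_ge0 (x + t%:C *: y).
rewrite formDl !formDr !formZl !formZr conj_realC !raddfD /= !Re_realM (Re_formC y x).
lra.
Qed.

End HermitianForm.

Section Hilbert.
Variables (R : realType) (H : lmodType R[i]) (ip : H -> H -> R[i]).
Hypothesis hH : is_hilbert ip.

Let ip_linl a x y z : ip (a *: x + y) z = a * ip x z + ip y z.
Proof. by case: hH. Qed.
Let ip_conj x y : ip y x = Num.conj (ip x y).
Proof. by case: hH. Qed.
Let ip_ge0 x : 0 <= ip x x.
Proof. by case: hH. Qed.

Definition ipDl := formDl ip_linl.
Definition ipZl := formZl ip_linl.
Definition ipBl := formBl ip_linl.
Definition ipNl := formNl ip_linl.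
Definition ip0l := form0l ip_linl.
Definition ipDr := formDr ip_linl ip_conj.
Definition ipZr := formZr ip_linl ip_conj.
Definition ipBr := formBr ip_linl ip_conj.
Definition ipNr := formNr ip_linl ip_conj.
Definition ip0r := form0r ip_linl ip_conj.
Definition Re_ipC := Re_formC ip_conj.

Local Notation nsq := (normsq ip).

Lemma normsq_ge0 x : 0 <= nsq x.
Proof. exact: Re_form_diag_ge0 ip_ge0 x. Qed.

Lemma ip_normsq x : ip x x = (nsq x)%:C.
Proof. by apply: complex_Re_Im => //=; apply: Im_form_diag ip_ge0 x. Qed.

Lemma normsq_eq0 x : nsq x = 0 -> x = 0.
Proof. by move=> x0; case: hH => _ _ _ ip_eq0 _; apply: ip_eq0; rewrite ip_normsq x0. Qed.

Lemma normsqD x y : nsq (x + y) = nsq x + nsq y + 2 * Re (ip x y).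
Proof. rewrite /normsq ipDl !ipDr !raddfD /= (Re_ipC y x); lra. Qed.

Lemma normsqZ a x : nsq (a *: x) = Re (a * Num.conj a) * nsq x.
Proof. by rewrite /normsq ipZl ipZr ip_normsq; case: a => a b /=; ring. Qed.

Lemma normsqB x y : nsq (x - y) = nsq x + nsq y - 2 * Re (ip x y).
Proof.
rewrite normsqD /normsq ipNl ipNr ipNr opprK raddfN /=; lra.
Qed.

Lemma normsq_real_scale (r : R) x : nsq (r%:C *: x) = r ^+ 2 * nsq x.
Proof. by rewrite normsqZ conj_realC /= mulr0 subr0 expr2. Qed.

Lemma ip_CauchySchwarz x y : Re (ip x y) ^+ 2 <= nsq x * nsq y.
Proof. exact: form_CauchySchwarz. Qed.

Definition hnorm x := Num.sqrt (nsq x).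

Lemma hnorm_ge0 x : 0 <= hnorm x.
Proof. exact: sqrtr_ge0. Qed.

Lemma hnorm_sqr x : hnorm x ^+ 2 = nsq x.
Proof. by rewrite sqr_sqrtr ?normsq_ge0. Qed.

Lemma hnorm_eq0 x : hnorm x = 0 -> x = 0.
Proof. by move=> x0; apply: normsq_eq0; rewrite -hnorm_sqr x0 expr0n. Qed.

Lemma hnorm0 : hnorm 0 = 0.
Proof. by rewrite /hnorm /normsq ip0l sqrtr0. Qed.

Lemma hnorm_le x (a : R) : 0 <= a -> nsq x <= a ^+ 2 -> hnorm x <= a.
Proof. by move=> a_ge0 xa; rewrite -(ger0_norm a_ge0) -sqrtr_sqr ler_sqrt ?sqr_ge0. Qed.

Lemma hnorm_lt x (a : R) : 0 < a -> nsq x < a ^+ 2 -> hnorm x < a.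
Proof. by move=> a_gt0 xa; rewrite -(gtr0_norm a_gt0) -sqrtr_sqr ltr_sqrt ?exprn_gt0. Qed.

Lemma Re_ip_le x y : `|Re (ip x y)| <= hnorm x * hnorm y.
Proof.
rewrite -(ger0_norm (mulr_ge0 (hnorm_ge0 x) (hnorm_ge0 y))) -ler_sqr ?nnegrE //.
by rewrite real_normK ?num_real // ger0_norm ?mulr_ge0 ?hnorm_ge0 // exprMn !hnorm_sqr ip_CauchySchwarz.
Qed.

Lemma Im_ip_le x y : `|Im (ip x y)| <= hnorm x * hnorm y.
Proof.
have -> : Im (ip x y) = Re (ip x ('i *: y)) by rewrite ipZr; case: (ip x y) => a b /=; ring.
suff <- : hnorm ('i *: y) = hnorm y by apply: Re_ip_le.
by rewrite /hnorm normsqZ /=; congr Num.sqrt; ring.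
Qed.

Lemma hnormD x y : hnorm (x + y) <= hnorm x + hnorm y.
Proof.
apply: hnorm_le; first by rewrite addr_ge0 ?hnorm_ge0.
rewrite normsqD -!hnorm_sqr; have := ler_norm (Re (ip x y)); have := Re_ip_le x y; nra.
Qed.

Lemma hnormN x : hnorm (- x) = hnorm x.
Proof. by rewrite /hnorm /normsq -scaleN1r ipZl ipZr rmorphN1 !mulN1r opprK. Qed.
Lemma hnormC x y : hnorm (x - y) = hnorm (y - x).
Proof. by rewrite -hnormN opprB. Qed.

Lemma hnorm_dist x y z : hnorm (x - z) <= hnorm (x - y) + hnorm (y - z).
Proof. have -> : x - z = (x - y) + (y - z) by rewrite addrA subrK. exact: hnormD. Qed.

Lemma hnormZ a x : hnorm (a *: x) = Num.sqrt (Re (a * Num.conj a)) * hnorm x.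
Proof. by rewrite /hnorm normsqZ sqrtrM //; case: a => a b /=; nra. Qed.

Lemma hnorm_real_scale (r : R) x : hnorm (r%:C *: x) = `|r| * hnorm x.
Proof. by rewrite hnormZ /= oppr0 mulr0 subr0 -expr2 sqrtr_sqr. Qed.

Local Notation cvg := (cvg_to ip).

Lemma cvg_toP u l :
  cvg u l <-> forall e, 0 < e -> exists N, forall n, (N <= n)%N -> hnorm (u n - l) < e.
Proof.
split=> ul e e_gt0.
  have [N uN] := ul _ (exprn_gt0 2 e_gt0).
  by exists N => n /uN; apply: hnorm_lt.
have [|N uN] := ul (Num.sqrt e); first by rewrite sqrtr_gt0.
by exists N => n /uN; rewrite /hnorm ltr_sqrt.
Qed.

Lemma cvg_to_le u l w (b : R) N :
  cvg u l -> (forall n, (N <= n)%N -> hnorm (u n - w) <= b) -> hnorm (l - w) <= b.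
Proof.
move=> /cvg_toP ul uw; apply/ler_addgt0Pr => e /ul [M uM].
have := hnorm_dist l (u (maxn N M)) w; rewrite (hnormC l (u _)).
have := uM _ (leq_maxr N M); have := uw _ (leq_maxl N M); lra.
Qed.

Lemma cvg_to_unique u l m : cvg u l -> cvg u m -> l = m.
Proof.
move=> ul /cvg_toP um; apply/eqP; rewrite -subr_eq0; apply/eqP/hnorm_eq0/eqP.
rewrite eq_le hnorm_ge0 andbT; apply/ler_addgt0Pr => e /um [N uN].
by rewrite add0r; apply: (cvg_to_le ul) => n /uN /ltW.
Qed.

Lemma eq_cvg_to u v l : (forall n, u n = v n) -> cvg u l -> cvg v l.
Proof. by move=> uv; rewrite (functional_extensionality u v uv). Qed.

Lemma cvg_to_cst l : cvg (fun => l) l.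
Proof. by apply/cvg_toP => e e_gt0; exists 0%N => n _; rewrite subrr hnorm0. Qed.

Lemma cvg_to_squeeze u l v m :
  (forall n, hnorm (u n - l) <= hnorm (v n - m)) -> cvg v m -> cvg u l.
Proof.
move=> uv /cvg_toP vm; apply/cvg_toP => e /vm [N vN].
by exists N => n /vN; apply: le_lt_trans.
Qed.

Lemma cvg_toD u v l m : cvg u l -> cvg v m -> cvg (fun n => u n + v n) (l + m).
Proof.
move=> /cvg_toP ul /cvg_toP vm; apply/cvg_toP => e e_gt0.
have [N uN] := ul _ (divr_gt0 e_gt0 (ltr0Sn _ 1)).
have [M vM] := vm _ (divr_gt0 e_gt0 (ltr0Sn _ 1)).
exists (maxn N M) => n; rewrite geq_max => /andP[/uN ? /vM ?].
rewrite opprD addrACA; apply: le_lt_trans (hnormD _ _) _; lra.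
Qed.

Lemma cvg_to_subseq u l (f : nat -> nat) :
  (forall k, (k <= f k)%N) -> cvg u l -> cvg (fun k => u (f k)) l.
Proof.
move=> f_ge /cvg_toP ul; apply/cvg_toP => e /ul [N uN].
by exists N => n Nn; apply/uN/(leq_trans Nn).
Qed.

Lemma cvg_to_bounded (B : H -> H) (K : R) u l :
  (forall x y, B (x - y) = B x - B y) -> (forall x, hnorm (B x) <= K * hnorm x) ->
  cvg u l -> cvg (fun n => B (u n)) (B l).
Proof.
move=> B_sub B_le /cvg_toP ul; apply/cvg_toP => e e_gt0.
have K1_gt0 : 0 < `|K| + 1 by rewrite ltr_pwDr.
have [N uN] := ul _ (divr_gt0 e_gt0 K1_gt0); exists N => n /uN.
rewrite ltr_pdivlMr // -B_sub => ule; have := B_le (u n - l).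
have := hnorm_ge0 (u n - l); have := ler_norm K; nra.
Qed.

Lemma cvg_toZ a u l : cvg u l -> cvg (fun n => a *: u n) (a *: l).
Proof. by apply: cvg_to_bounded => [x y|x]; rewrite ?scalerBr ?hnormZ. Qed.

Lemma cvg_toB u v l m : cvg u l -> cvg v m -> cvg (fun n => u n - v n) (l - m).
Proof.
move=> ul /(cvg_toZ (-1)) vm; rewrite -scaleN1r.
by apply: eq_cvg_to (cvg_toD ul vm) => n; rewrite scaleN1r.
Qed.

Section LinearFun.
Variable B : H -> H.
Hypothesis B_lin : linear B.

Lemma lin0 : B 0 = 0.
Proof.
have := B_lin 1 0 0; rewrite scaler0 addr0 scale1r => B00.
by apply: (addrI (B 0)); rewrite addr0 -B00.
Qed.

Lemma linD x y : B (x + y) = B x + B y.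
Proof. by have := B_lin 1 x y; rewrite !scale1r. Qed.

Lemma linZ a x : B (a *: x) = a *: B x.
Proof. by have := B_lin a x 0; rewrite !addr0 lin0 addr0. Qed.

Lemma linB x y : B (x - y) = B x - B y.
Proof. by rewrite -scaleN1r linD linZ scaleN1r. Qed.

End LinearFun.

Definition selfadjoint (B : H -> H) := forall x y, ip (B x) y = ip x (B y).

Definition le_scalar (B : H -> H) (c : R) := forall x, Re (ip (B x) x) <= c * nsq x.

Lemma selfadjoint_Im_diag B : selfadjoint B -> forall x, Im (ip (B x) x) = 0.
Proof.
move=> B_sa x; have := ip_conj (B x) x; rewrite -B_sa.
case: (ip (B x) x) => a b [] /eqP; rewrite -subr_eq0 opprK -mulr2n mulrn_eq0 /=.
by move/eqP.
Qed.

Lemma Im_diag_selfadjoint B : linear B -> (forall x, Im (ip (B x) x) = 0) -> selfadjoint B.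
Proof.
move=> B_lin B_Im x y.
have := B_Im (x + y); rewrite (linD B_lin) ipDl !ipDr.
have := B_Im (x + 'i *: y); rewrite (linD B_lin) (linZ B_lin) ipDl !ipDr !ipZl !ipZr.
have := B_Im x; have := B_Im y; rewrite (ip_conj (B y) x).
case: (ip (B x) x) (ip (B x) y) (ip (B y) x) (ip (B y) y) => [? ?] [? ?] [? ?] [? ?] /=.
by move=> *; congr (_ +i* _); lra.
Qed.

Lemma positive_selfadjoint B : linear B -> (forall x, 0 <= ip (B x) x) -> selfadjoint B.
Proof. by move=> B_lin B_ge0; apply: Im_diag_selfadjoint => // x; apply: ger0_Im. Qed.

Lemma normsq_le_form B c : linear B -> (forall x, 0 <= ip (B x) x) -> 0 <= c ->
  le_scalar B c -> forall x, nsq (B x) <= c * Re (ip (B x) x).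
Proof.
move=> B_lin B_ge0 c_ge0 B_le x.
have B_sa := positive_selfadjoint B_lin B_ge0.
have Bf_linl a u v z : ip (B (a *: u + v)) z = a * ip (B u) z + ip (B v) z.
  by rewrite B_lin ip_linl.
have Bf_conj u v : ip (B v) u = Num.conj (ip (B u) v) by rewrite B_sa ip_conj.
have CS := form_CauchySchwarz Bf_linl Bf_conj B_ge0 x (B x).
have q_ge0 : 0 <= Re (ip (B x) x) by have := B_ge0 x; rewrite ge0_complex => /andP[].
have := B_le (B x); have := normsq_ge0 (B x); rewrite -/(nsq (B x)) in CS *.
set q := Re (ip (B x) x) in q_ge0 CS *; set n := nsq (B x) in CS *.
move=> n_ge0 BB_le; have [->|n_neq0] := eqVneq n 0; first by rewrite mulr_ge0.
have : n * n <= n * (c * q) by nra.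
by rewrite ler_pM2l // lt_def n_neq0 n_ge0.
Qed.

Lemma positive_form_eq0 B c w : linear B -> (forall x, 0 <= ip (B x) x) -> 0 <= c ->
  le_scalar B c -> Re (ip (B w) w) = 0 -> B w = 0.
Proof.
move=> B_lin B_ge0 c_ge0 B_le Bw0; apply: normsq_eq0; apply/eqP.
rewrite eq_le normsq_ge0 andbT -(mulr0 c) -Bw0.
exact: normsq_le_form B_lin B_ge0 c_ge0 B_le w.
Qed.

Lemma bounded_op_hnorm B :
  bounded_op ip B -> exists2 K, 0 <= K & forall x, hnorm (B x) <= K * hnorm x.
Proof.
case=> _ [M B_le]; exists (Num.sqrt `|M|) => [|x]; first exact: sqrtr_ge0.
rewrite /hnorm -sqrtrM // ler_sqrt ?mulr_ge0 ?normsq_ge0 //.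
by apply: le_trans (B_le x) _; rewrite ler_wpM2r ?normsq_ge0 ?ler_norm.
Qed.

Lemma hnorm_bounded_op B K :
  linear B -> (forall x, hnorm (B x) <= K * hnorm x) -> bounded_op ip B.
Proof.
move=> B_lin B_le; split => //; exists (K ^+ 2) => x.
have := B_le x; have := hnorm_ge0 (B x); have := hnorm_ge0 x.
rewrite -(hnorm_sqr (B x)) -(hnorm_sqr x); nra.
Qed.

Lemma le_scalar_hnorm B K : (forall x, hnorm (B x) <= K * hnorm x) -> le_scalar B K.
Proof.
move=> B_le x; apply: le_trans (ler_norm _) _; apply: le_trans (Re_ip_le _ _) _.
by rewrite -hnorm_sqr; have := B_le x; have := hnorm_ge0 x; nra.
Qed.

Lemma positive_op_le_scalar B : positive_op ip B -> exists2 c, 0 < c & le_scalar B c.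
Proof.
move=> [/bounded_op_hnorm [K K_ge0 B_le] _]; exists (K + 1); first by rewrite ltr_wpDl.
move=> x; apply: le_trans (le_scalar_hnorm B_le x) _.
by rewrite ler_wpM2r ?normsq_ge0 // lerDl.
Qed.

Lemma ip_cvg_approx u l y e : cvg u l -> 0 < e -> exists n,
  `|Re (ip l y) - Re (ip (u n) y)| < e /\ `|Im (ip l y) - Im (ip (u n) y)| < e.
Proof.
move=> /cvg_toP ul e_gt0; have y1_gt0 : 0 < hnorm y + 1 by rewrite ltr_pwDr ?hnorm_ge0.
have [N uN] := ul _ (divr_gt0 e_gt0 y1_gt0); exists N.
have := uN N (leqnn N); rewrite ltr_pdivlMr // hnormC => ule.
rewrite -!raddfB /= -ipBl; have := hnorm_ge0 y; have := hnorm_ge0 (l - u N).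
by split; [have := Re_ip_le (l - u N) y | have := Im_ip_le (l - u N) y]; nra.
Qed.

Lemma Re_ip_cvg_le u l y (a : R) : cvg u l -> (forall n, Re (ip (u n) y) <= a) -> Re (ip l y) <= a.
Proof.
move=> ul ua; apply/ler_addgt0Pr => e /(ip_cvg_approx y ul) [n [Re_n _]].
by move: Re_n; rewrite ltr_norml => /andP[]; have := ua n; lra.
Qed.

Lemma Re_ip_cvg_ge u l y (a : R) : cvg u l -> (forall n, a <= Re (ip (u n) y)) -> a <= Re (ip l y).
Proof.
move=> ul ua; apply/ler_addgt0Pr => e /(ip_cvg_approx y ul) [n [Re_n _]].
by move: Re_n; rewrite ltr_norml => /andP[]; have := ua n; lra.
Qed.

Lemma Im_ip_cvg_eq0 u l y : cvg u l -> (forall n, Im (ip (u n) y) = 0) -> Im (ip l y) = 0.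
Proof.
move=> ul u0; apply/normr0_eq0/eqP; rewrite eq_le normr_ge0 andbT.
apply/ler_addgt0Pr => e /(ip_cvg_approx y ul) [n [_]].
by rewrite u0 subr0 add0r => /ltW.
Qed.

Section StrongLimit.
Variables (Bn : nat -> H -> H) (B : H -> H).
Hypothesis Bn_cvg : forall x, cvg (fun n => Bn n x) (B x).

Lemma strong_limit_linear : (forall n, linear (Bn n)) -> linear B.
Proof.
move=> Bn_lin a x y; apply: cvg_to_unique (Bn_cvg (a *: x + y)) _.
apply: eq_cvg_to (cvg_toD (cvg_toZ a (Bn_cvg x)) (Bn_cvg y)) => n.
by rewrite Bn_lin.
Qed.

Lemma strong_limit_ge0 : (forall n x, 0 <= ip (Bn n x) x) -> forall x, 0 <= ip (B x) x.
Proof.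
move=> Bn_ge0 x; rewrite ge0_complex; apply/andP; split.
  by apply/eqP; apply: (Im_ip_cvg_eq0 (Bn_cvg x)) => n; apply: ger0_Im.
by apply: (Re_ip_cvg_ge (Bn_cvg x)) => n; have := Bn_ge0 n x; rewrite ge0_complex => /andP[].
Qed.

Lemma strong_limit_selfadjoint : (forall n, linear (Bn n)) -> (forall n, selfadjoint (Bn n)) ->
  selfadjoint B.
Proof.
move=> Bn_lin Bn_sa; apply: Im_diag_selfadjoint; first exact: strong_limit_linear.
by move=> x; apply: (Im_ip_cvg_eq0 (Bn_cvg x)) => n; apply: selfadjoint_Im_diag.
Qed.

Lemma strong_limit_le_scalar c : (forall n, le_scalar (Bn n) c) -> le_scalar B c.
Proof. by move=> Bn_le x; apply: (Re_ip_cvg_le (Bn_cvg x)) => n; apply: Bn_le. Qed.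

Lemma strong_limit_apply K u l : (forall n, linear (Bn n)) ->
  (forall n x, hnorm (Bn n x) <= K * hnorm x) -> cvg u l -> cvg (fun n => Bn n (u n)) (B l).
Proof.
move=> Bn_lin Bn_le ul; rewrite -[B l]add0r.
apply: eq_cvg_to (cvg_toD (u := fun n => Bn n (u n - l)) _ (Bn_cvg l)) => [n|].
  by rewrite -(linD (Bn_lin n)) subrK.
apply: cvg_to_squeeze (cvg_toZ (`|K|)%:C (cvg_toB ul (cvg_to_cst l))) => n.
rewrite subrr scaler0 !subr0 hnorm_real_scale normr_id.
by apply: le_trans (Bn_le n _) _; rewrite ler_wpM2r ?hnorm_ge0 ?ler_norm.
Qed.

End StrongLimit.

Fixpoint root_bound (k : nat) : R :=
  if k is k'.+1 then (1 + root_bound k' ^+ 2) / 2 else 0.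

Lemma root_bound_ge0_le1 k : 0 <= root_bound k <= 1.
Proof.
elim: k => [|k /andP[y_ge0 y_le1]] /=; first by rewrite lexx ler01.
by apply/andP; split; nra.
Qed.

Lemma root_bound_le k l : (k <= l)%N -> root_bound k <= root_bound l.
Proof.
move/subnKC <-; elim: (l - k)%N => [|n IH]; first by rewrite addn0.
apply: le_trans IH _; rewrite addnS /=.
by have /andP[? ?] := root_bound_ge0_le1 (k + n); nra.
Qed.

(* With d_k = 1 - root_bound k we have d_{k+1} = d_k (1 - d_k / 2). *)
Lemma root_bound_rate k : (1 - root_bound k) * (k%:R + 2) <= 2.
Proof.
elim: k => [|k IH] /=; first by rewrite subr0 mul1r add0r.
have /andP[y_ge0 y_le1] := root_bound_ge0_le1 k; rewrite -[k.+1]addn1 natrD.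
have : 0 <= (2 - (1 - root_bound k) * (k%:R + 2)) * (1 - (1 - root_bound k) / 2).
  by apply: mulr_ge0; lra.
have := sqr_ge0 (1 - root_bound k); nra.
Qed.

Lemma rate_eventually_lt (a e : R) : 0 <= a -> 0 < e ->
  exists N, forall k, (N <= k)%N -> 2 / (k%:R + 2) * a < e.
Proof.
move=> a_ge0 e_gt0; set b := 2 * a / e.
have b_ge0 : 0 <= b by rewrite /b divr_ge0 ?mulr_ge0 // ltW.
exists (Num.Def.archi_bound b) => k Nk.
have := archi_boundP b_ge0; have : (Num.Def.archi_bound b)%:R <= k%:R :> R by rewrite ler_nat.
have k2_gt0 : 0 < k%:R + 2 :> R by rewrite ltr_wpDl ?ler0n.
move=> Nk_le b_lt; rewrite mulrC mulrA ltr_pdivrMr //.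
have : b < k%:R + 2 by lra.
by rewrite /b ltr_pdivrMr // mulrC [e * _]mulrC.
Qed.

Section RootIteration.
Variable A : H -> H.
Hypotheses (A_lin : linear A) (A_sa : selfadjoint A) (A_le : forall x, hnorm (A x) <= hnorm x).

(* Iteration for the solution Y = I - (I - A)^{1/2} of Y = (A + Y^2)/2; root_bound k
   bounds its operator norm. *)
Fixpoint root_iter (k : nat) (x : H) : H :=
  if k is k'.+1 then (2^-1)%:C *: (A x + root_iter k' (root_iter k' x)) else 0.

Lemma root_iter_linear k : linear (root_iter k).
Proof.
elim: k => [|k IH] a x y /=; first by rewrite scaler0 addr0.
rewrite A_lin !IH scalerA mulrC -scalerA -scalerDr; congr (_ *: _).
by rewrite scalerDr addrACA.
Qed.

Lemma root_iter_selfadjoint k : selfadjoint (root_iter k).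
Proof.
elim: k => [|k IH] x y /=; first by rewrite ip0l ip0r.
by rewrite ipZl ipZr conj_realC ipDl ipDr A_sa !IH.
Qed.

Lemma root_iter_hnorm_le k x : hnorm (root_iter k x) <= root_bound k * hnorm x.
Proof.
elim: k x => [|k IH] x /=; first by rewrite hnorm0 mul0r.
rewrite hnorm_real_scale ger0_norm ?invr_ge0 ?ler0n //.
have /andP[y_ge0 y_le1] := root_bound_ge0_le1 k.
have := hnormD (A x) (root_iter k (root_iter k x)); have := A_le x.
have := IH (root_iter k x); have := IH x; have := hnorm_ge0 x.
have := hnorm_ge0 (root_iter k x); nra.
Qed.

Lemma root_iter_contraction k x : hnorm (root_iter k x) <= hnorm x.
Proof.
apply: le_trans (root_iter_hnorm_le k x) _; rewrite ler_piMl ?hnorm_ge0 //.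
by case/andP: (root_bound_ge0_le1 k).
Qed.

Lemma root_iter_dist k l x : (k <= l)%N ->
  hnorm (root_iter l x - root_iter k x) <= (root_bound l - root_bound k) * hnorm x.
Proof.
elim: k l x => [|k IH] l x kl.
  by rewrite /= !subr0; apply: root_iter_hnorm_le.
case: l kl => [//|l] /[!ltnS] kl.
set Yl := root_iter l; set Yk := root_iter k.
have -> : root_iter l.+1 x - root_iter k.+1 x =
    (2^-1)%:C *: (Yl (Yl x - Yk x) + (Yl (Yk x) - Yk (Yk x))).
  rewrite /= -scalerBr; congr (_ *: _).
  by rewrite /Yl (linB (root_iter_linear l)) opprD addrACA subrr add0r addrA subrK.
rewrite hnorm_real_scale ger0_norm ?invr_ge0 ?ler0n //=.
have /andP[? ?] := root_bound_ge0_le1 k; have /andP[? ?] := root_bound_ge0_le1 l.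
have := root_bound_le kl; have := hnorm_ge0 x; have := hnorm_ge0 (Yl x - Yk x).
have := hnorm_ge0 (Yk x); have := hnormD (Yl (Yl x - Yk x)) (Yl (Yk x) - Yk (Yk x)).
have := root_iter_hnorm_le l (Yl x - Yk x); have := IH l (Yk x) kl.
have := IH l x kl; have := root_iter_hnorm_le k x.
nra.
Qed.

Lemma root_iter_cauchy k l x : (k <= l)%N ->
  hnorm (root_iter l x - root_iter k x) <= 2 / (k%:R + 2) * hnorm x.
Proof.
move=> kl; apply: le_trans (root_iter_dist x kl) _; rewrite ler_wpM2r ?hnorm_ge0 //.
have k2_gt0 : 0 < k%:R + 2 :> R by rewrite ltr_wpDl ?ler0n.
have := root_bound_rate k; have /andP[_ ?] := root_bound_ge0_le1 l.
by rewrite ler_pdivlMr //; nra.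
Qed.

Lemma root_iter_commute B : linear B -> (forall x, B (A x) = A (B x)) ->
  forall k x, B (root_iter k x) = root_iter k (B x).
Proof.
move=> B_lin BA; elim=> [|k IH] x /=; first exact: lin0.
by rewrite (linZ B_lin) (linD B_lin) BA !IH.
Qed.

End RootIteration.

Definition root_limit (A : H -> H) (x : H) : H :=
  epsilon (inhabits 0) (cvg (fun k => root_iter A k x)).

Section RootLimit.
Variable A : H -> H.
Hypotheses (A_lin : linear A) (A_sa : selfadjoint A) (A_le : forall x, hnorm (A x) <= hnorm x).

Let Y := root_iter A.
Let Ylim := root_limit A.

Lemma root_limit_cvg x : cvg (fun k => Y k x) (Ylim x).
Proof.
apply: epsilon_spec; case: hH => _ _ _ _ complete; apply: complete => e e_gt0.
have [|N N_lt] := rate_eventually_lt (hnorm_ge0 x) (e := Num.sqrt e); first by rewrite sqrtr_gt0.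
exists N => m n Nm Nn; rewrite -(sqr_sqrtr (ltW e_gt0)) -hnorm_sqr.
rewrite ltr_pXn2r ?nnegrE ?hnorm_ge0 ?sqrtr_ge0 //.
have [nm|/ltnW mn] := leqP n m.
  exact: le_lt_trans (root_iter_cauchy A_lin A_le x nm) (N_lt _ Nn).
by rewrite hnormC; apply: le_lt_trans (root_iter_cauchy A_lin A_le x mn) (N_lt _ Nm).
Qed.

Lemma root_limit_rate x k : hnorm (Ylim x - Y k x) <= 2 / (k%:R + 2) * hnorm x.
Proof.
by apply: (cvg_to_le (N := k) (root_limit_cvg x)) => n; apply: root_iter_cauchy.
Qed.

Lemma root_limit_linear : linear Ylim.
Proof. exact: strong_limit_linear root_limit_cvg (root_iter_linear A_lin). Qed.

Lemma root_limit_selfadjoint : selfadjoint Ylim.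
Proof.
exact: strong_limit_selfadjoint root_limit_cvg (root_iter_linear A_lin)
  (root_iter_selfadjoint A_sa).
Qed.

Lemma root_limit_contraction x : hnorm (Ylim x) <= hnorm x.
Proof.
rewrite -[Ylim x]subr0; apply: (cvg_to_le (N := 0) (root_limit_cvg x)) => n _.
by rewrite subr0 root_iter_contraction.
Qed.

Lemma root_limit_fixpoint x : Ylim x = (2^-1)%:C *: (A x + Ylim (Ylim x)).
Proof.
apply: cvg_to_unique (cvg_to_subseq (f := S) leqnSn (root_limit_cvg x)) _ => /=.
apply: cvg_toZ; apply: cvg_toD (cvg_to_cst _) _.
apply: (strong_limit_apply (K := 1) root_limit_cvg _ _ (root_limit_cvg x)).
  exact: root_iter_linear.
by move=> n y; rewrite mul1r root_iter_contraction.
Qed.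

Lemma root_limit_commute B K : linear B -> (forall x, hnorm (B x) <= K * hnorm x) ->
  (forall x, B (A x) = A (B x)) -> forall x, B (Ylim x) = Ylim (B x).
Proof.
move=> B_lin B_le BA x; apply: cvg_to_unique (cvg_to_bounded (linB B_lin) B_le (root_limit_cvg x)) _.
apply: eq_cvg_to (root_limit_cvg (B x)) => k.
by rewrite (root_iter_commute B_lin BA).
Qed.

End RootLimit.

Section RootLimitContinuity.
Variables (An : nat -> H -> H) (A : H -> H).
Hypotheses (An_lin : forall n, linear (An n))
  (An_le : forall n x, hnorm (An n x) <= hnorm x)
  (A_lin : linear A) (A_le : forall x, hnorm (A x) <= hnorm x)
  (An_cvg : forall x, cvg (fun n => An n x) (A x)).

Lemma root_iter_continuous k x : cvg (fun n => root_iter (An n) k x) (root_iter A k x).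
Proof.
elim: k x => [|k IH] x /=; first exact: cvg_to_cst.
apply/cvg_toZ/cvg_toD; first exact: An_cvg.
apply: (strong_limit_apply (K := 1) IH _ _ (IH x)) => n.
  exact: root_iter_linear.
by move=> y; rewrite mul1r root_iter_contraction.
Qed.

Lemma root_limit_continuous x : cvg (fun n => root_limit (An n) x) (root_limit A x).
Proof.
apply/cvg_toP => e e_gt0; have e3_gt0 : 0 < e / 3 by rewrite divr_gt0.
have [k k_lt] := rate_eventually_lt (hnorm_ge0 x) e3_gt0.
have /cvg_toP/(_ _ e3_gt0) [N N_lt] := root_iter_continuous k x.
exists N => n Nn; have := N_lt n Nn; have := k_lt k (leqnn k).
have := root_limit_rate (An_lin n) (An_le n) x k.
have := root_limit_rate A_lin A_le x k.
have := hnorm_dist (root_limit (An n) x) (root_iter (An n) k x) (root_limit A x).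
have := hnorm_dist (root_iter (An n) k x) (root_iter A k x) (root_limit A x).
rewrite (hnormC (root_iter A k x)); lra.
Qed.

End RootLimitContinuity.

Definition one_sub_scaled (T : H -> H) (c : R) (x : H) : H := x - (c^-1)%:C *: T x.

Definition root_op (T : H -> H) (c : R) (x : H) : H :=
  (Num.sqrt c)%:C *: (x - root_limit (one_sub_scaled T c) x).

Section RootOp.
Variables (T : H -> H) (c : R).
Hypotheses (T_lin : linear T) (T_ge0 : forall x, 0 <= ip (T x) x) (c_gt0 : 0 < c)
  (T_le : le_scalar T c).

Let A := one_sub_scaled T c.
Let Ylim := root_limit A.
Let Q := root_op T c.

Lemma one_sub_scaled_linear : linear A.
Proof.
move=> a x y; rewrite /A /one_sub_scaled T_lin scalerDr scalerBr scalerA.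
by rewrite [_ * a]mulrC -scalerA opprD addrACA.
Qed.

Lemma one_sub_scaled_selfadjoint : selfadjoint A.
Proof.
move=> x y; rewrite /A /one_sub_scaled ipBl ipBr ipZl ipZr conj_realC.
by rewrite (positive_selfadjoint T_lin T_ge0).
Qed.

Lemma one_sub_scaled_contraction x : hnorm (A x) <= hnorm x.
Proof.
apply: hnorm_le; first exact: hnorm_ge0.
rewrite hnorm_sqr /A /one_sub_scaled normsqB normsq_real_scale ipZr conj_realC.
rewrite Re_realM Re_ipC; set q := Re (ip (T x) x).
have := normsq_le_form T_lin T_ge0 (ltW c_gt0) T_le x; rewrite -/q.
have q_ge0 : 0 <= q by have := T_ge0 x; rewrite ge0_complex => /andP[].
have ci_gt0 : 0 < c^-1 by rewrite invr_gt0.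
move=> TT_le; suff : c^-1 ^+ 2 * nsq (T x) <= c^-1 * q by nra.
have -> : c^-1 * q = c^-1 ^+ 2 * (c * q) by field; rewrite gt_eqF.
by rewrite ler_wpM2l ?exprn_ge0 ?(ltW ci_gt0).
Qed.

Let A_lin := one_sub_scaled_linear.
Let A_sa := one_sub_scaled_selfadjoint.
Let A_le := one_sub_scaled_contraction.

Lemma root_op_linear : linear Q.
Proof.
move=> a x y; rewrite /Q /root_op (root_limit_linear A_lin A_le).
by rewrite opprD addrACA -scalerBr scalerDr !scalerA [_ * a]mulrC.
Qed.

Lemma root_op_hnorm_le x : hnorm (Q x) <= 2 * Num.sqrt c * hnorm x.
Proof.
rewrite /Q /root_op hnorm_real_scale ger0_norm ?sqrtr_ge0 // [2 * _]mulrC -mulrA.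
rewrite ler_wpM2l ?sqrtr_ge0 //.
have := hnorm_dist x 0 (Ylim x); rewrite !subr0 sub0r hnormN.
by have := root_limit_contraction A_lin A_le x; lra.
Qed.

Lemma root_op_selfadjoint : selfadjoint Q.
Proof.
move=> x y; rewrite /Q /root_op ipZl ipZr conj_realC ipBl ipBr.
by rewrite (root_limit_selfadjoint A_lin A_sa A_le).
Qed.

Lemma root_op_ge0 x : 0 <= ip (Q x) x.
Proof.
have Y_Im := selfadjoint_Im_diag (root_limit_selfadjoint A_lin A_sa A_le) x.
have Y_real : ip (Ylim x) x = (Re (ip (Ylim x) x))%:C by apply: complex_Re_Im.
rewrite /Q /root_op ipZl ipBl ip_normsq -/Ylim Y_real -rmorphB -rmorphM ler0c.
rewrite mulr_ge0 ?sqrtr_ge0 // subr_ge0 -hnorm_sqr.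
apply: le_trans (ler_norm _) _; apply: le_trans (Re_ip_le _ _) _.
by rewrite expr2 ler_wpM2r ?hnorm_ge0 ?root_limit_contraction.
Qed.

Lemma root_op_sqr x : Q (Q x) = T x.
Proof.
have Y2 : Ylim (Ylim x) = Ylim x + Ylim x - A x.
  have := root_limit_fixpoint A_lin A_le x; rewrite -/Ylim => /(congr1 ( *:%R 2%:C)).
  rewrite scalerA -rmorphM mulfV ?pnatr_eq0 // scale1r rmorph_nat scaler_nat.
  by move=> /(canLR (addKr _)); rewrite addrC mulr2n.
rewrite /Q /root_op (linZ (root_limit_linear A_lin A_le)) -scalerBr scalerA.
rewrite (linB (root_limit_linear A_lin A_le)) -/Ylim Y2 /A /one_sub_scaled.
rewrite -rmorphM -expr2 sqr_sqrtr ?(ltW c_gt0) //.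
have -> : x - Ylim x - (Ylim x - (Ylim x + Ylim x - (x - (c^-1)%:C *: T x))) = (c^-1)%:C *: T x.
  by rewrite opprB (addrAC (Ylim x + Ylim x)) addrK addrA subrK opprB addrC subrK.
by rewrite scalerA -rmorphM mulfV ?gt_eqF // scale1r.
Qed.

Lemma root_op_commute B K : linear B -> (forall x, hnorm (B x) <= K * hnorm x) ->
  (forall x, B (T x) = T (B x)) -> forall x, B (Q x) = Q (B x).
Proof.
move=> B_lin B_le BT x; have BA y : B (A y) = A (B y).
  by rewrite /A /one_sub_scaled (linB B_lin) (linZ B_lin) BT.
by rewrite /Q /root_op (linZ B_lin) (linB B_lin) (root_limit_commute A_lin A_le B_lin B_le BA).
Qed.

Lemma root_op_positive : positive_op ip Q.
Proof.
split; last exact: root_op_ge0.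
exact: hnorm_bounded_op root_op_linear root_op_hnorm_le.
Qed.

(* S commutes with T = S^2, hence with Q, so (S + Q)(S - Q) = S^2 - Q^2 = 0. *)
Lemma root_op_unique S : positive_op ip S -> (forall x, S (S x) = T x) -> forall x, S x = Q x.
Proof.
move=> [S_bdd S_ge0] SS v; have S_lin := S_bdd.1.
have [K K_ge0 S_le] := bounded_op_hnorm S_bdd.
have ST x : S (T x) = T (S x) by rewrite -!SS.
have SQ := root_op_commute S_lin S_le ST.
set w := S v - Q v.
have sum0 : ip (S w) w + ip (Q w) w = 0.
  rewrite -ipDl /w (linB S_lin) (linB root_op_linear) SS root_op_sqr SQ.
  by rewrite addrA subrK subrr ip0l.
have [Sw0 Qw0] : Re (ip (S w) w) = 0 /\ Re (ip (Q w) w) = 0.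
  move: sum0 (S_ge0 w) (root_op_ge0 w); rewrite !ge0_complex.
  case: (ip (S w) w) (ip (Q w) w) => [a b] [a' b'] [ab0 _] /andP[_ a_ge0] /andP[_ a'_ge0].
  by move: a_ge0 a'_ge0 => /= *; split; lra.
have S_w0 := positive_form_eq0 S_lin S_ge0 K_ge0 (le_scalar_hnorm S_le) Sw0.
have Q_w0 : Q w = 0.
  apply: positive_form_eq0 root_op_linear root_op_ge0 _ (le_scalar_hnorm root_op_hnorm_le) Qw0.
  by rewrite mulr_ge0 ?sqrtr_ge0.
have w0 : w = 0.
  apply: normsq_eq0; rewrite /normsq {2}/w ipBl (positive_selfadjoint S_lin S_ge0).
  by rewrite root_op_selfadjoint S_w0 Q_w0 ip0r subrr.
by apply/eqP; rewrite -subr_eq0 -/w w0.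
Qed.

End RootOp.

Section RootOpContinuity.
Variables (Tn : nat -> H -> H) (T : H -> H) (c : R).
Hypotheses (Tn_lin : forall n, linear (Tn n)) (Tn_ge0 : forall n x, 0 <= ip (Tn n x) x)
  (Tn_le : forall n, le_scalar (Tn n) c)
  (T_lin : linear T) (T_ge0 : forall x, 0 <= ip (T x) x) (T_le : le_scalar T c)
  (c_gt0 : 0 < c) (Tn_cvg : forall x, cvg (fun n => Tn n x) (T x)).

Lemma root_op_continuous x : cvg (fun n => root_op (Tn n) c x) (root_op T c x).
Proof.
apply/cvg_toZ/cvg_toB; first exact: cvg_to_cst.
apply: root_limit_continuous => [n|n|||y].
- exact: one_sub_scaled_linear.
- exact: one_sub_scaled_contraction.
- exact: one_sub_scaled_linear.
- exact: one_sub_scaled_contraction.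
- by apply: cvg_toB (cvg_to_cst y) _; apply: cvg_toZ.
Qed.

End RootOpContinuity.

Lemma le_scalar_positive_op B c : linear B -> (forall x, 0 <= ip (B x) x) -> 0 <= c ->
  le_scalar B c -> positive_op ip B.
Proof.
move=> B_lin B_ge0 c_ge0 B_le; split=> //; split=> //; exists (c * c) => x.
apply: le_trans (normsq_le_form B_lin B_ge0 c_ge0 B_le x) _.
by rewrite -mulrA ler_wpM2l.
Qed.

Section OpSqrt.
Variables (T : H -> H) (c : R).
Hypotheses (T_lin : linear T) (T_ge0 : forall x, 0 <= ip (T x) x) (c_gt0 : 0 < c)
  (T_le : le_scalar T c).

Lemma op_sqrt_spec :
  positive_op ip (op_sqrt ip T) /\ forall x, op_sqrt ip T (op_sqrt ip T x) = T x.
Proof.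
apply: (epsilon_spec (inhabits id) (fun S => positive_op ip S /\ forall x, S (S x) = T x)).
by exists (root_op T c); split; [apply: root_op_positive | apply: root_op_sqr].
Qed.

Lemma op_sqrt_root_op x : op_sqrt ip T x = root_op T c x.
Proof. by case: op_sqrt_spec => S_pos SS; apply: root_op_unique. Qed.

End OpSqrt.

Lemma orth_proj_selfadjoint P : orth_proj ip P -> selfadjoint P.
Proof. by case. Qed.

Lemma orth_proj_linear P : orth_proj ip P -> linear P.
Proof. by case=> [[]]. Qed.

Lemma orth_proj_idem P : orth_proj ip P -> forall x, P (P x) = P x.
Proof. by case. Qed.

Lemma orth_proj_orthogonal P y : orth_proj ip P -> ip (y - P y) (P y) = 0.
Proof.
move=> P_proj; rewrite -(orth_proj_selfadjoint P_proj) (linB (orth_proj_linear P_proj)).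
by rewrite (orth_proj_idem P_proj) subrr ip0l.
Qed.

Lemma ip_Phi P B : orth_proj ip P -> positive_op ip B ->
  forall x, let y := op_sqrt ip B x in ip (Phi ip P B x) x = ip (y - P y) (y - P y).
Proof.
move=> P_proj B_pos x y; have [c c_gt0 B_le] := positive_op_le_scalar B_pos.
have [[[S_lin _] S_ge0] _] := op_sqrt_spec B_pos.1.1 B_pos.2 c_gt0 B_le.
rewrite /Phi (positive_selfadjoint S_lin S_ge0) -/y [in RHS]ipBr.
by rewrite orth_proj_orthogonal // subr0.
Qed.

Section Phi.
Variables (P B : H -> H).
Hypotheses (P_proj : orth_proj ip P) (B_pos : positive_op ip B).

Lemma Phi_linear : linear (Phi ip P B).
Proof.
have [c c_gt0 B_le] := positive_op_le_scalar B_pos.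
have [[[S_lin _] _] _] := op_sqrt_spec B_pos.1.1 B_pos.2 c_gt0 B_le.
have P_lin := orth_proj_linear P_proj.
move=> a x y; rewrite /Phi S_lin P_lin opprD addrACA -scalerBr.
exact: S_lin.
Qed.

Lemma Phi_ge0 x : 0 <= ip (Phi ip P B x) x.
Proof. by rewrite ip_Phi. Qed.

Lemma Phi_le x : Re (ip (Phi ip P B x) x) <= Re (ip (B x) x).
Proof.
have [c c_gt0 B_le] := positive_op_le_scalar B_pos.
have [[[S_lin _] S_ge0] SS] := op_sqrt_spec B_pos.1.1 B_pos.2 c_gt0 B_le.
rewrite ip_Phi //; set y := op_sqrt ip B x.
have -> : Re (ip (B x) x) = normsq ip y by rewrite -SS (positive_selfadjoint S_lin S_ge0).
rewrite -[y in normsq ip y](subrK (P y)) normsqD -/(normsq ip _) orth_proj_orthogonal //.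
by rewrite mulr0 addr0 lerDl normsq_ge0.
Qed.

Lemma Phi_fixed : (forall x, P (B x) = 0) -> forall x, Phi ip P B x = B x.
Proof.
move=> PB0; have [c c_gt0 B_le] := positive_op_le_scalar B_pos.
have [[[S_lin _] S_ge0] SS] := op_sqrt_spec B_pos.1.1 B_pos.2 c_gt0 B_le.
set S := op_sqrt ip B in S_lin S_ge0 SS *.
have S_sa := positive_selfadjoint S_lin S_ge0; have P_sa := orth_proj_selfadjoint P_proj.
have SP0 y : S (P y) = 0.
  by apply: normsq_eq0; rewrite /normsq S_sa SS P_sa PB0 ip0r.
have PS0 y : P (S y) = 0.
  by apply: normsq_eq0; rewrite /normsq P_sa (orth_proj_idem P_proj) S_sa SP0 ip0r.
by move=> x; rewrite /Phi -/S PS0 subr0 SS.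
Qed.

End Phi.

Section Residual.
Variables (PA PB R0 : H -> H) (c : R).
Hypotheses (PA_proj : orth_proj ip PA) (PB_proj : orth_proj ip PB)
  (R0_pos : positive_op ip R0) (c_gt0 : 0 < c) (R0_le : le_scalar R0 c).

Local Notation Rn := (residual ip PA PB R0).

Lemma residual_positive n : positive_op ip (Rn n) /\ le_scalar (Rn n) c.
Proof.
elim: n => [|n [Rn_pos Rn_le]] //=; set P := if odd n then PA else PB.
have P_proj : orth_proj ip P by rewrite /P; case: (odd n).
have Rn1_le : le_scalar (Phi ip P (Rn n)) c.
  by move=> x; apply: le_trans (Phi_le P_proj Rn_pos x) (Rn_le x).
split=> //; apply: le_scalar_positive_op (ltW c_gt0) Rn1_le.
  exact: Phi_linear.
exact: Phi_ge0.
Qed.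

Let Rn_lin n := (residual_positive n).1.1.1.
Let Rn_ge0 n := (residual_positive n).1.2.
Let Rn_le n := (residual_positive n).2.

Variable T : H -> H.
Hypothesis Rn_cvg : strong_limit ip Rn T.

Let T_lin := strong_limit_linear Rn_cvg Rn_lin.
Let T_ge0 := strong_limit_ge0 Rn_cvg Rn_ge0.
Let T_le := strong_limit_le_scalar Rn_cvg Rn_le.

Lemma residual_limit_positive : positive_op ip T.
Proof. exact: le_scalar_positive_op T_lin T_ge0 (ltW c_gt0) T_le. Qed.

Lemma residual_limit_range P (f : nat -> nat) : orth_proj ip P -> (forall k, (k <= f k)%N) ->
  (forall k, Rn (f k).+1 = Phi ip P (Rn (f k))) -> forall x, P (T x) = 0.
Proof.
move=> P_proj f_ge Rf; have P_lin := orth_proj_linear P_proj.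
have [P_bdd _ _] := P_proj; have [KP _ P_le] := bounded_op_hnorm P_bdd.
set S := root_op T c; pose Sk k := root_op (Rn (f k)) c.
have Sk_cvg x : cvg (fun k => Sk k x) (S x).
  apply: (root_op_continuous (Tn := fun k => Rn (f k))) => // [k|y].
    exact: Rn_lin.
  exact: cvg_to_subseq f_ge (Rn_cvg y).
have SPS x : S (P (S x)) = 0.
  have lim1 : cvg (fun k => Rn (f k).+1 x) (S (S x - P (S x))).
    apply: eq_cvg_to (strong_limit_apply (K := 2 * Num.sqrt c)
      (u := fun k => Sk k x - P (Sk k x)) Sk_cvg _ _ _) => [k|k|k y|].
    - by rewrite Rf /Phi !(op_sqrt_root_op (Rn_lin _) (Rn_ge0 _) c_gt0 (Rn_le _)).
    - exact: root_op_linear (Rn_lin _) (Rn_ge0 _) c_gt0 (Rn_le _).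
    - exact: root_op_hnorm_le (Rn_lin _) (Rn_ge0 _) c_gt0 (Rn_le _) y.
    - exact: cvg_toB (Sk_cvg x) (cvg_to_bounded (linB P_lin) P_le (Sk_cvg x)).
  have lim2 : cvg (fun k => Rn (f k).+1 x) (T x).
    exact: (cvg_to_subseq (f := fun k => (f k).+1) (fun k => leqW (f_ge k)) (Rn_cvg x)).
  have := cvg_to_unique lim1 lim2.
  rewrite /S (linB (root_op_linear T_lin T_ge0 c_gt0 T_le)) (root_op_sqr T_lin T_ge0 c_gt0 T_le).
  by move/eqP; rewrite subr_eq addrC -subr_eq subrr eq_sym => /eqP.
move=> x; rewrite -(root_op_sqr T_lin T_ge0 c_gt0 T_le x) -/S; apply: normsq_eq0.
rewrite /normsq (orth_proj_selfadjoint P_proj) (orth_proj_idem P_proj).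
by rewrite (root_op_selfadjoint T_lin T_ge0 c_gt0 T_le) -/S SPS ip0r.
Qed.

Lemma residual_limit_kernel x : PA (T x) = 0 /\ PB (T x) = 0.
Proof.
split.
  apply: (residual_limit_range (f := fun k => k.*2.+1)) => // k.
    by rewrite -addnn leqW // leq_addr.
  by rewrite /= odd_double.
apply: (residual_limit_range (f := fun k => k.*2)) => // k.
  by rewrite -addnn leq_addr.
by rewrite /= odd_double.
Qed.

End Residual.

Lemma residual_fixed PA PB T : orth_proj ip PA -> orth_proj ip PB -> positive_op ip T ->
  (forall x, PA (T x) = 0 /\ PB (T x) = 0) -> forall n, residual ip PA PB T n = T.
Proof.
move=> PA_proj PB_proj T_pos T_K; elim=> [//|n /= ->].
apply: functional_extensionality.
by case: (odd n); apply: Phi_fixed => // x; case: (T_K x).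
Qed.

End Hilbert.

Theorem corollary2p2 (R : realType) (H : lmodType R[i]) (ip : H -> H -> R[i])
  (hH : is_hilbert ip) (PA PB : H -> H)
  (hPA : orth_proj ip PA) (hPB : orth_proj ip PB) :
  forall T : H -> H,
    (exists R0 : H -> H, positive_op ip R0 /\
        strong_limit ip (residual ip PA PB R0) T)
    <->
    (positive_op ip T /\ forall x, PA (T x) = 0 /\ PB (T x) = 0).
Proof.
move=> T; split=> [[R0 [R0_pos R0_T]]|[T_pos T_K]].
  have [c c_gt0 R0_le] := positive_op_le_scalar hH R0_pos.
  split; first exact (residual_limit_positive hH hPA hPB R0_pos c_gt0 R0_le R0_T).
  exact (residual_limit_kernel hH hPA hPB R0_pos c_gt0 R0_le R0_T).
exists T; split=> // x.
rewrite (functional_extensionality _ _ (residual_fixed hH hPA hPB T_pos T_K)).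
exact: cvg_to_cst.
Qed.
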